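(* For every integer $m\ge 0$, the dimension of the subspace $F(L)^{(3,m)}$ of $F(L)$ spanned by classes with exactly $3$ letters $x$ and $m$ letters $y$ equals $\lfloor\frac{m-1}{2}\rfloor-\lfloor\frac{m-1}{3}\rfloor$.
   Context: $A=\mathbb{R}\langle x,y\rangle$; $L\subset A$ is the free Lie algebra on $x,y$ (smallest Lie subalgebra of $(A,[a,b]=ab-ba)$ containing $x,y$). $F(L)$ is the quotient of $L\otimes L$ by the span of $a\otimes b-b\otimes a$ and $a\otimes[b,c]-[a,b]\otimes c$ ($a,b,c\in L$); it is bigraded by the numbers of letters $x$ and $y$. *)

From mathcomp Require Import all_boot all_order all_algebra.
From mathcomp Require Import reals.
Set Implicit Arguments. Unset Strict Implicit. Unset Printing Implicit Defensive.
Import Order.TTheory GRing.Theory Num.Theory.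
Local Open Scope ring_scope.

Section FreeLie.
Variable R : realType.

(* words in the letters x (= false) and y (= true) *)
Definition word := seq bool.

(* elements of A = R<x,y>, viewed as coefficient functions on words
   (the algebra of formal series; L below lies inside the polynomials) *)
Definition ser := word -> R.

Definition sadd (f g : ser) : ser := fun w => f w + g w.
Definition sscale (c : R) (f : ser) : ser := fun w => c * f w.
Definition smul (f g : ser) : ser :=
  fun w => \sum_(i < (size w).+1) f (take i w) * g (drop i w).
Definition bracket (f g : ser) : ser := fun w => smul f g w - smul g f w.
Definition sX : ser := fun w => (w == [:: false])%:R.
Definition sY : ser := fun w => (w == [:: true])%:R.
Definition szero : ser := fun _ => 0.

Inductive inL : ser -> Prop :=
| inL_X : inL sX
| inL_Y : inL sY
| inL_0 : inL szero
| inL_add f g : inL f -> inL g -> inL (sadd f g)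
| inL_scale c f : inL f -> inL (sscale c f)
| inL_br f g : inL f -> inL g -> inL (bracket f g).

(* A (x) A realised as coefficient functions on pairs of words;
   a (x) b  ~  (u,v) |-> a(u) b(v).  Since R is a field, L (x) L embeds. *)
Definition tens := word -> word -> R.
Definition tprod (a b : ser) : tens := fun u v => a u * b v.
Definition tzero : tens := fun _ _ => 0.
Definition tadd (s t : tens) : tens := fun u v => s u v + t u v.
Definition tsub (s t : tens) : tens := fun u v => s u v - t u v.
Definition tscale (c : R) (t : tens) : tens := fun u v => c * t u v.

Inductive tspan (S : tens -> Prop) : tens -> Prop :=
| tspan_0 : tspan S tzero
| tspan_gen t : S t -> tspan S t
| tspan_add s t : tspan S s -> tspan S t -> tspan S (tadd s t)
| tspan_scale c t : tspan S t -> tspan S (tscale c t).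

Definition LL : tens -> Prop :=
  tspan (fun t => exists a b, [/\ inL a, inL b & t = tprod a b]).

(* the subspace divided out to obtain F(L) *)
Definition FLrel : tens -> Prop :=
  tspan (fun t => exists a b c, [/\ inL a, inL b, inL c &
           (t = tsub (tprod a b) (tprod b a) \/
            t = tsub (tprod a (bracket b c)) (tprod (bracket a b) c))]).

Definition homog (p q : nat) (t : tens) : Prop :=
  forall u v, t u v != 0 ->
    count negb (u ++ v) = p /\ count id (u ++ v) = q.

Definition tsum (d : nat) (c : 'I_d -> R) (b : 'I_d -> tens) : tens :=
  fun u v => \sum_(i < d) c i * b i u v.

(* The subspace F(L)^{(p,q)} of F(L) spanned by the classes of elements of
   L (x) L with p letters x and q letters y has dimension d: there are d such
   elements whose classes form a basis of that subspace. *)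
Definition FLdim (p q d : nat) : Prop :=
  exists b : 'I_d -> tens,
    [/\ (forall i, LL (b i) /\ homog p q (b i)),
        (forall c : 'I_d -> R, FLrel (tsum c b) -> forall i, c i = 0) &
        (forall t, LL t -> homog p q t ->
           exists c : 'I_d -> R, FLrel (tsub t (tsum c b)))].

End FreeLie.

From mathcomp Require Import all_boot all_order all_algebra.
From mathcomp Require Import reals.
From mathcomp Require Import ring zify.
From Stdlib Require Import FunctionalExtensionality.
Set Implicit Arguments. Unset Strict Implicit. Unset Printing Implicit Defensive.
Import GRing.Theory Num.Theory.
Local Open Scope ring_scope.

(* Write [e_q = (ad y)^q x] and [Θ(i,j,k) = [e_i, e_j] ⊗ e_k].  The relations of
   F(L) reduce every element of (L ⊗ L)^(3,m) to a combination of the Θ(i,j,k)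
   with i + j + k = m, and in F(L) these are antisymmetric in (i,j), invariant
   under cyclic permutations, and satisfy Θ(i+1,j,k) + Θ(i,j+1,k) + Θ(i,j,k+1) = 0.
   Reading Θ(i,j,k) as t₁^i t₂^j t₃^k, these are the relations of the alternating
   polynomials in t₁, t₂, t₃ with t₁ + t₂ + t₃ = 0, a free R[σ₂, σ₃]-module on the
   Vandermonde; so F(L)^(3,m) is spanned by elements standing for σ₂^a σ₃^b Θ(0,1,2)
   with 2a + 3b = m - 3, of which there are ⌊(m-1)/2⌋ - ⌊(m-1)/3⌋.
   They are independent because the trace form (a, b) ↦ tr(ρ(a) ρ(b)) of the
   representation ρ of R<x,y> on R[X]^3 sending x to a cyclic permutation matrix
   and y to diag(X, 0, -1) is symmetric and invariant, hence factors through F(L).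
   It specializes (t₁, t₂, t₃) to (X, 1, -1-X) and maps σ₂^a σ₃^b Θ(0,1,2) to
   σ₂^a σ₃^b times a polynomial that does not vanish at 0; as σ₃ has X-adic
   valuation 1 and σ₂(0) ≠ 0, these images have pairwise distinct valuations b. *)

Section Compositions.
Variable V : zmodType.
Implicit Types G H : nat -> nat -> nat -> V.

Definition sum_comp3 n G : V :=
  \sum_(i < n.+1) \sum_(j < n.+1) \sum_(k < n.+1)
     (if (i + j + k == n)%N then G i j k else 0).

Lemma sum_ord_eq n c (F : nat -> V) :
  \sum_(i < n) (if nat_of_ord i == c then F i else 0) = if (c < n)%N then F c else 0.
Proof. by rewrite -big_mkcond big_ord1_eq. Qed.

Lemma sum_comp3_first n G :
  \sum_(i < n.+1) \sum_(r < (n - i).+1) G i r (n - i - r)%N = sum_comp3 n G.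
Proof.
apply: eq_bigr => [[i hi]] _ /=.
have inner j : \sum_(k < n.+1) (if (i + j + k == n)%N then G i j k else 0)
    = if (i + j <= n)%N then G i j (n - i - j)%N else 0.
  case: (leqP (i + j) n) => hij; last first.
    by apply: big1 => k _; rewrite ifF //; apply/eqP; lia.
  rewrite (eq_bigr (fun k : 'I_n.+1 =>
    if nat_of_ord k == (n - i - j)%N then G i j k else 0)) => [|k _]; last first.
    by congr (if _ then _ else _); apply/eqP/eqP; lia.
  by rewrite sum_ord_eq ifT //; lia.
rewrite (eq_bigr _ (fun (j : 'I_n.+1) _ => inner j)) -big_mkcond /=.
rewrite (big_ord_widen n.+1 (fun r => G i r (n - i - r)%N)); last by lia.
by apply: eq_bigl => j; apply/idP/idP; lia.
Qed.

Lemma sum_comp3_rot n G : sum_comp3 n G = sum_comp3 n (fun i j k => G j k i).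
Proof.
rewrite /sum_comp3 [RHS]exchange_big /=; apply: eq_bigr => a _.
rewrite [RHS]exchange_big /=; apply: eq_bigr => b _; apply: eq_bigr => c _.
by have -> : (c + a + b = a + b + c)%N by lia.
Qed.

Lemma sum_comp3_last n G :
  \sum_(i < n.+1) \sum_(r < i.+1) G r (i - r)%N (n - i)%N = sum_comp3 n G.
Proof.
rewrite (reindex_inj rev_ord_inj) sum_comp3_rot -sum_comp3_first.
apply: eq_bigr => [[i hi]] _ /=; rewrite subSS; apply: eq_bigr => r _.
by have -> : (n - (n - i) = i)%N by lia.
Qed.

Lemma sum_comp3B n G H :
  sum_comp3 n (fun i j k => G i j k - H i j k) = sum_comp3 n G - sum_comp3 n H.
Proof.
rewrite /sum_comp3 -sumrB; apply: eq_bigr => i _; rewrite -sumrB.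
apply: eq_bigr => j _; rewrite -sumrB; apply: eq_bigr => k _.
by case: ifP; rewrite ?subr0.
Qed.

End Compositions.

Lemma free_of_distinct_valuations (F : idomainType) d (v : 'I_d -> nat)
    (q : 'I_d -> {poly F}) (c : 'I_d -> F) :
  injective v -> (forall l, (q l)`_0 != 0) ->
  \sum_(l < d) c l *: ('X^(v l) * q l) = 0 -> forall l, c l = 0.
Proof.
move=> v_inj q0 hsum.
suff S n l : v l = n -> c l = 0 by move=> l; apply: S _ l erefl.
elim/ltn_ind: n l => n IH l vl.
have := congr1 (fun p : {poly F} => p`_n) hsum.
rewrite /= coef_sum coef0 (bigD1 l) //= big1 => [|l' nl']; last first.
  rewrite coefZ coefXnM; case: ltnP => [_|vl'n]; first by rewrite mulr0.
  have : v l' != n by rewrite -vl; apply: contra nl' => /eqP /v_inj ->.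
  by move=> ?; rewrite (IH (v l')) ?mul0r //; lia.
rewrite addr0 coefZ coefXnM vl ltnn subnn => /eqP.
by rewrite mulf_eq0 (negbTE (q0 l)) orbF => /eqP.
Qed.

Lemma exists_neq0_of_sum (V : zmodType) (I : Type) (r : seq I) (F : I -> V) :
  \sum_(i <- r) F i != 0 -> exists i, F i != 0.
Proof.
elim: r => [|x r IH]; first by rewrite big_nil eqxx.
rewrite big_cons; case: (eqVneq (F x) 0) => [->|hx] h; last by exists x.
by apply: IH; rewrite add0r in h.
Qed.

Section Series.
Variable R : realType.
Local Notation ser := (ser R).
Implicit Types f g h : ser.

Lemma ser_ext f g : (forall w, f w = g w) -> f = g.
Proof. exact: functional_extensionality. Qed.

Lemma smulE f g n w : size w = n ->
  smul f g w = \sum_(i < n.+1) f (take i w) * g (drop i w).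
Proof. by move=> <-. Qed.

Lemma smulA f g h : smul (smul f g) h = smul f (smul g h).
Proof.
apply: ser_ext => w; set n := size w.
pose G j k (l : nat) := f (take j w) * g (take k (drop j w)) * h (drop (j + k) w).
transitivity (sum_comp3 n G).
  rewrite -sum_comp3_last (@smulE _ h n w erefl); apply: eq_bigr => [[i hi]] _ /=.
  rewrite (@smulE f g i); last by rewrite size_takel //; lia.
  rewrite mulr_suml; apply: eq_bigr => [[j hj]] _ /=.
  rewrite /G take_takel; last by lia.
  by rewrite take_drop subnK // addnC subnK.
rewrite -sum_comp3_first (@smulE f _ n w erefl); apply: eq_bigr => [[j hj]] _ /=.
rewrite (@smulE g h (n - j)) ?size_drop // mulr_sumr.
by apply: eq_bigr => [[k hk]] _ /=; rewrite /G drop_drop addnC mulrA.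
Qed.

Lemma smulBl f g h w : smul (fun u => f u - g u) h w = smul f h w - smul g h w.
Proof. by rewrite /smul -sumrB; apply: eq_bigr => i _; rewrite mulrBl. Qed.

Lemma smulBr f g h w : smul h (fun u => f u - g u) w = smul h f w - smul h g w.
Proof. by rewrite /smul -sumrB; apply: eq_bigr => i _; rewrite mulrBr. Qed.

Lemma smulZl c f g w : smul (sscale c f) g w = c * smul f g w.
Proof. by rewrite /smul mulr_sumr; apply: eq_bigr => i _; rewrite mulrA. Qed.

Lemma smulZr c f g w : smul f (sscale c g) w = c * smul f g w.
Proof. by rewrite /smul mulr_sumr; apply: eq_bigr => i _; rewrite mulrCA. Qed.

Lemma smul0l g w : smul (szero R) g w = 0.
Proof. by apply: big1 => i _; rewrite mul0r. Qed.

Lemma smul0r f w : smul f (szero R) w = 0.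
Proof. by apply: big1 => i _; rewrite mulr0. Qed.

Lemma jacobi f g h :
  bracket f (bracket g h) = sadd (bracket (bracket f g) h) (bracket g (bracket f h)).
Proof. by apply: ser_ext => w; rewrite /sadd /bracket !smulBl !smulBr !smulA; ring. Qed.

Lemma bracket_anti f g : bracket f g = sscale (-1) (bracket g f).
Proof. by apply: ser_ext => w; rewrite /sscale /bracket; ring. Qed.

Lemma bracketZl c f g : bracket (sscale c f) g = sscale c (bracket f g).
Proof. by apply: ser_ext => w; rewrite /sscale /bracket smulZl smulZr mulrBr. Qed.

Lemma bracketZr c f g : bracket f (sscale c g) = sscale c (bracket f g).
Proof. by apply: ser_ext => w; rewrite /sscale /bracket smulZl smulZr mulrBr. Qed.

Lemma bracket0l g : bracket (szero R) g = szero R.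
Proof. by apply: ser_ext => w; rewrite /bracket smul0l smul0r subr0. Qed.

Lemma bracket0r f : bracket f (szero R) = szero R.
Proof. by apply: ser_ext => w; rewrite /bracket smul0l smul0r subr0. Qed.

Lemma bracketxx f : bracket f f = szero R.
Proof. by apply: ser_ext => w; rewrite /bracket subrr. Qed.

Lemma sscaleA c d f : sscale c (sscale d f) = sscale (c * d) f.
Proof. by apply: ser_ext => w; rewrite /sscale mulrA. Qed.

Lemma sscale0 f : sscale 0 f = szero R.
Proof. by apply: ser_ext => w; rewrite /sscale mul0r. Qed.

Lemma sscale1 f : sscale 1 f = f.
Proof. by apply: ser_ext => w; rewrite /sscale mul1r. Qed.

End Series.

Section Congruence.
Variable R : realType.
Local Notation ser := (ser R).
Local Notation tens := (tens R).
Implicit Types (a b c : ser) (s t : tens).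

Lemma tens_ext s t : (forall u v, s u v = t u v) -> s = t.
Proof. by move=> h; do 2 apply: functional_extensionality => ?; apply: h. Qed.

Lemma FLrel_ext s t : (forall u v, s u v = t u v) -> FLrel s -> FLrel t.
Proof. by move=> /tens_ext ->. Qed.

Definition eqFL s t := FLrel (tsub s t).

Lemma eqFL_ext s t : (forall u v, s u v = t u v) -> eqFL s t.
Proof.
move=> /tens_ext <-; apply: (FLrel_ext _ (tspan_0 _)) => u v.
by rewrite /tsub /tzero subrr.
Qed.

Lemma eqFL_sym s t : eqFL s t -> eqFL t s.
Proof.
move/(tspan_scale (-1)); apply: FLrel_ext => u v.
by rewrite /tsub /tscale; ring.
Qed.

Lemma eqFL_trans s t r : eqFL s t -> eqFL t r -> eqFL s r.
Proof.
move=> h1 h2; apply: FLrel_ext (tspan_add h1 h2) => u v.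
by rewrite /tsub /tadd; ring.
Qed.

Lemma eqFLD s1 t1 s2 t2 : eqFL s1 t1 -> eqFL s2 t2 -> eqFL (tadd s1 s2) (tadd t1 t2).
Proof.
move=> h1 h2; apply: FLrel_ext (tspan_add h1 h2) => u v.
by rewrite /tsub /tadd; ring.
Qed.

Lemma eqFLZ k s t : eqFL s t -> eqFL (tscale k s) (tscale k t).
Proof.
move/(tspan_scale k); apply: FLrel_ext => u v.
by rewrite /tsub /tscale; ring.
Qed.

Lemma eqFL_tprodC a b : inL a -> inL b -> eqFL (tprod a b) (tprod b a).
Proof. by move=> ha hb; apply: tspan_gen; exists a, b, a; split=> //; left. Qed.

Lemma eqFL_invariant a b c : inL a -> inL b -> inL c ->
  eqFL (tprod a (bracket b c)) (tprod (bracket a b) c).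
Proof. by move=> ha hb hc; apply: tspan_gen; exists a, b, c; split=> //; right. Qed.

Lemma tprodZl k a b : tprod (sscale k a) b = tscale k (tprod a b).
Proof. by apply: tens_ext => u v; rewrite /tprod /sscale /tscale mulrA. Qed.

Lemma tprodZr k a b : tprod a (sscale k b) = tscale k (tprod a b).
Proof. by apply: tens_ext => u v; rewrite /tprod /sscale /tscale mulrCA. Qed.

Lemma tprodDl a b c : tprod (sadd a b) c = tadd (tprod a c) (tprod b c).
Proof. by apply: tens_ext => u v; rewrite /tprod /sadd /tadd mulrDl. Qed.

Lemma tprod0l b : tprod (szero R) b = tzero R.
Proof. by apply: tens_ext => u v; rewrite /tprod /szero mul0r. Qed.

Lemma tprod0r a : tprod a (szero R) = tzero R.
Proof. by apply: tens_ext => u v; rewrite /tprod /szero mulr0. Qed.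

Section Spanned.
Variables (d : nat) (b : 'I_d -> tens).

Definition spanned t := exists c : 'I_d -> R, eqFL t (tsum c b).

Lemma spanned0 : spanned (tzero R).
Proof.
exists (fun _ => 0); apply: eqFL_ext => u v.
by rewrite /tzero /tsum big1 // => i _; rewrite mul0r.
Qed.

Lemma spannedD s t : spanned s -> spanned t -> spanned (tadd s t).
Proof.
move=> [c1 h1] [c2 h2]; exists (fun i => c1 i + c2 i).
apply: eqFL_trans (eqFLD h1 h2) (eqFL_ext _) => u v.
by rewrite /tadd /tsum -big_split; apply: eq_bigr => i _; rewrite mulrDl.
Qed.

Lemma spannedZ k t : spanned t -> spanned (tscale k t).
Proof.
move=> [c h]; exists (fun i => k * c i).
apply: eqFL_trans (eqFLZ k h) (eqFL_ext _) => u v.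
by rewrite /tscale /tsum mulr_sumr; apply: eq_bigr => i _; rewrite mulrA.
Qed.

Lemma spanned_eqFL s t : eqFL s t -> spanned t -> spanned s.
Proof. by move=> h [c h2]; exists c; apply: eqFL_trans h h2. Qed.

Lemma spanned_gen i : spanned (b i).
Proof.
exists (fun j => (j == i)%:R); apply: eqFL_ext => u v.
rewrite /tsum (bigD1 i) //= eqxx mul1r big1 ?addr0 // => j /negbTE ->.
by rewrite mul0r.
Qed.

End Spanned.

Lemma FLrel_kernel (V : lmodType R) (phi : tens -> V) :
    phi (tzero R) = 0 ->
    (forall s t, phi (tadd s t) = phi s + phi t) ->
    (forall k t, phi (tscale k t) = k *: phi t) ->
    (forall a b, inL a -> inL b -> phi (tprod a b) = phi (tprod b a)) ->
    (forall a b c, inL a -> inL b -> inL c ->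
       phi (tprod a (bracket b c)) = phi (tprod (bracket a b) c)) ->
  forall t, FLrel t -> phi t = 0.
Proof.
move=> phi0 phiD phiZ phiC phiI.
have phiB s t : phi (tsub s t) = phi s - phi t.
  have -> : tsub s t = tadd s (tscale (-1) t).
    by apply: tens_ext => u v; rewrite /tsub /tadd /tscale mulN1r.
  by rewrite phiD phiZ scaleN1r.
move=> t; elim=> [|_ [a [b [c [ha hb hc [->|->]]]]]|s {}t _ hs _ ht|k {}t _ ht].
- exact: phi0.
- by rewrite phiB phiC ?subrr.
- by rewrite phiB phiI ?subrr.
- by rewrite phiD hs ht addr0.
- by rewrite phiZ ht scaler0.
Qed.

End Congruence.

Fixpoint sum_words (V : zmodType) (k : nat) (F : word -> V) : V :=
  if k is k'.+1 then
    sum_words k' (fun w => F (false :: w)) + sum_words k' (fun w => F (true :: w))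
  else F [::].

Section SumWords.
Variables V W : zmodType.
Implicit Types F G : word -> V.

Lemma eq_sum_words k F G :
  (forall w, size w = k -> F w = G w) -> sum_words k F = sum_words k G.
Proof.
elim: k F G => [|k IH] F G h /=; first exact: h.
by congr (_ + _); apply: IH => w hw; apply: h; rewrite /= hw.
Qed.

Lemma sum_words_cat i j F :
  sum_words (i + j) F = sum_words i (fun u => sum_words j (fun v => F (u ++ v))).
Proof. by elim: i F => [|i IH] F //=; rewrite !IH. Qed.

Lemma sum_words_morph (f : V -> W) k F :
  f 0 = 0 -> {morph f : x y / x + y} -> f (sum_words k F) = sum_words k (f \o F).
Proof. by move=> f0 fD; elim: k F => [|k IH] F //=; rewrite fD !IH. Qed.

Lemma sum_wordsD k F G :
  sum_words k (fun w => F w + G w) = sum_words k F + sum_words k G.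
Proof. by elim: k F G => [|k IH] F G //=; rewrite !IH addrACA. Qed.

Lemma sum_words0 k : sum_words k (fun _ => (0 : V)) = 0.
Proof. by elim: k => [|k IH] //=; rewrite IH addr0. Qed.

Lemma sum_wordsB k F G :
  sum_words k (fun w => F w - G w) = sum_words k F - sum_words k G.
Proof.
rewrite sum_wordsD; congr (_ + _).
by elim: k G => [|k IH] G //=; rewrite !IH opprD.
Qed.

Lemma sum_words_big k n (F : 'I_n -> word -> V) :
  sum_words k (fun w => \sum_(i < n) F i w) = \sum_(i < n) sum_words k (F i).
Proof. by elim: k F => [|k IH] F //=; rewrite !IH -big_split. Qed.

End SumWords.

Section TraceForm.
Variable R : realType.
Local Notation ser := (ser R).
Local Notation tens := (tens R).
Local Notation P := {poly R}.
Local Notation M3 := 'M[{poly R}]_3.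
Implicit Types (f g h : ser) (s t : tens).

Definition yval (r : 'I_3) : P :=
  if (r : nat) == 0%N then 'X else if (r : nat) == 1%N then 0 else -1.
Definition repY : M3 := diag_mx (\row_r yval r).
Definition repX : M3 := \matrix_(r, s) ((s : nat) == (r.+1 %% 3)%N)%:R.

Definition rep (w : word) : M3 :=
  foldr (fun l A => (if l then repY else repX) *m A) 1%:M w.

Definition repk k f : M3 := sum_words k (fun w => (f w)%:P *: rep w).

Definition trace_form n t : P :=
  \sum_(i < n.+1) sum_words i (fun u =>
    sum_words (n - i) (fun v => (t u v)%:P * \tr (rep u *m rep v))).

Lemma rep_cat u v : rep (u ++ v) = rep u *m rep v.
Proof. by elim: u => [|l u IH] /=; rewrite ?mul1mx // IH mulmxA. Qed.

Lemma repk_smul k f g : repk k (smul f g) = \sum_(i < k.+1) repk i f *m repk (k - i) g.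
Proof.
rewrite /repk (eq_sum_words (G := fun w => \sum_(i < k.+1)
    ((f (take i w) * g (drop i w))%:P *: rep w))); last first.
  by move=> w hw; rewrite (smulE _ _ hw) rmorph_sum scaler_suml.
rewrite sum_words_big; apply: eq_bigr => [[i hi]] _ /=.
rewrite -{1}(subnKC (_ : (i <= k)%N)) // sum_words_cat.
rewrite (@sum_words_morph _ _ (mulmx^~ _)) ?mul0mx //; last by move=> A B; rewrite mulmxDl.
apply: eq_sum_words => u hu /=.
rewrite (@sum_words_morph _ _ (mulmx _)) ?mulmx0 //; last by move=> A B; rewrite mulmxDr.
apply: eq_sum_words => v hv /=.
rewrite -hu take_size_cat // drop_size_cat // rep_cat.
by rewrite -scalemxAl -scalemxAr scalerA rmorphM.
Qed.

Lemma repk_bracket k f g : repk k (bracket f g) =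
  \sum_(i < k.+1) (repk i f *m repk (k - i) g - repk i g *m repk (k - i) f).
Proof.
rewrite sumrB -!repk_smul /repk -sum_wordsB.
by apply: eq_sum_words => w _; rewrite rmorphB scalerBl.
Qed.

Lemma trace_form_big n d (F : 'I_d -> tens) :
  trace_form n (fun u v => \sum_(l < d) F l u v) = \sum_(l < d) trace_form n (F l).
Proof.
rewrite /trace_form exchange_big /=; apply: eq_bigr => i _.
rewrite -sum_words_big; apply: eq_sum_words => u _.
rewrite -sum_words_big; apply: eq_sum_words => v _.
by rewrite rmorph_sum mulr_suml.
Qed.

Lemma trace_formD n s t : trace_form n (tadd s t) = trace_form n s + trace_form n t.
Proof.
rewrite /trace_form -big_split; apply: eq_bigr => i _ /=.
rewrite -sum_wordsD; apply: eq_sum_words => u _.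
rewrite -sum_wordsD; apply: eq_sum_words => v _.
by rewrite /tadd rmorphD mulrDl.
Qed.

Lemma trace_formZ n k t : trace_form n (tscale k t) = k *: trace_form n t.
Proof.
rewrite -mul_polyC /trace_form mulr_sumr; apply: eq_bigr => i _ /=.
rewrite (@sum_words_morph _ _ ( *%R k%:P)) ?mulr0 //; last exact: mulrDr.
apply: eq_sum_words => u _ /=.
rewrite (@sum_words_morph _ _ ( *%R k%:P)) ?mulr0 //; last exact: mulrDr.
by apply: eq_sum_words => v _ /=; rewrite /tscale rmorphM mulrA.
Qed.

Lemma trace_form0 n : trace_form n (tzero R) = 0.
Proof.
have -> : tzero R = tscale 0 (tzero R) by apply: tens_ext => u v; rewrite /tscale mul0r.
by rewrite trace_formZ scale0r.
Qed.

Lemma trace_form_tprod n f g :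
  trace_form n (tprod f g) = \sum_(i < n.+1) \tr (repk i f *m repk (n - i) g).
Proof.
rewrite /trace_form; apply: eq_bigr => i _; rewrite /repk.
rewrite (@sum_words_morph _ _ (fun A => \tr (A *m _))); first last.
- by move=> A B; rewrite mulmxDl mxtraceD.
- by rewrite mul0mx mxtrace0.
apply: eq_sum_words => u _ /=.
rewrite (@sum_words_morph _ _ (fun A => \tr (_ *m A))); first last.
- by move=> A B; rewrite mulmxDr mxtraceD.
- by rewrite mulmx0 mxtrace0.
apply: eq_sum_words => v _ /=.
by rewrite -scalemxAl -scalemxAr !mxtraceZ /tprod rmorphM mulrA.
Qed.

Lemma trace_form_tprodC n f g : trace_form n (tprod f g) = trace_form n (tprod g f).
Proof.
rewrite !trace_form_tprod (reindex_inj rev_ord_inj) /=.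
apply: eq_bigr => [[i hi]] _ /=; rewrite mxtrace_mulC subSS.
by have -> : (n - (n - i) = i)%N by lia.
Qed.

Lemma trace_form_invariant n f g h :
  trace_form n (tprod f (bracket g h)) = trace_form n (tprod (bracket f g) h).
Proof.
pose F i := repk i f; pose G i := repk i g; pose H i := repk i h.
rewrite !trace_form_tprod.
transitivity (sum_comp3 n (fun i j k =>
    \tr (F i *m (G j *m H k)) - \tr (F i *m (H j *m G k)))).
  rewrite -sum_comp3_first; apply: eq_bigr => i _.
  rewrite repk_bracket mulmx_sumr raddf_sum.
  by apply: eq_bigr => r _; rewrite mulmxBr raddfB.
transitivity (sum_comp3 n (fun i j k =>
    \tr ((F i *m G j) *m H k) - \tr ((G i *m F j) *m H k))); last first.
  rewrite -sum_comp3_last; apply: eq_bigr => i _.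
  rewrite repk_bracket mulmx_suml raddf_sum.
  by apply: eq_bigr => r _; rewrite mulmxBl raddfB.
rewrite !sum_comp3B; congr (_ - _).
  by rewrite /sum_comp3; do 3 (apply: eq_bigr => ? _); rewrite mulmxA.
rewrite sum_comp3_rot /sum_comp3; do 3 (apply: eq_bigr => ? _); case: ifP => // _.
by rewrite mulmxA mxtrace_mulC mulmxA.
Qed.

Lemma trace_form_FLrel n t : FLrel t -> trace_form n t = 0.
Proof.
apply: FLrel_kernel.
- exact: trace_form0.
- exact: trace_formD.
- exact: trace_formZ.
- by move=> f g _ _; apply: trace_form_tprodC.
- by move=> f g h _ _ _; apply: trace_form_invariant.
Qed.

Lemma trace_form_tsum n d (c : 'I_d -> R) (b : 'I_d -> tens) :
  trace_form n (tsum c b) = \sum_(l < d) c l *: trace_form n (b l).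
Proof. by rewrite /tsum trace_form_big; apply: eq_bigr => l _; apply: trace_formZ. Qed.

End TraceForm.

Section LieElements.
Variable R : realType.
Local Notation ser := (ser R).
Local Notation tens := (tens R).

Fixpoint ady (q : nat) : ser := if q is q'.+1 then bracket (sY R) (ady q') else sX R.

Lemma inL_ady q : inL (ady q).
Proof. by elim: q => [|q IH] /=; [apply: inL_X | apply: inL_br (inL_Y R) IH]. Qed.

Definition Theta i j k : tens := tprod (bracket (ady i) (ady j)) (ady k).

Definition family := nat -> nat -> nat -> tens.

Definition mulS2 (F : family) : family := fun i j k =>
  tadd (tadd (F i.+1 j.+1 k) (F i j.+1 k.+1)) (F i.+1 j k.+1).
Definition mulS3 (F : family) : family := fun i j k => F i.+1 j.+1 k.+1.

(* Under Θ(i,j,k) ↦ t₁^i t₂^j t₃^k, [mulS2] and [mulS3] are the multiplications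
   by σ₂ and σ₃, so that [Psi a b] stands for σ₂^a σ₃^b Θ. *)
Definition Psi a b : family := iter a mulS2 (iter b mulS3 Theta).

Lemma Psi_ind (Q : family -> Prop) :
  Q Theta -> (forall F, Q F -> Q (mulS3 F)) -> (forall F, Q F -> Q (mulS2 F)) ->
  forall a b, Q (Psi a b).
Proof.
move=> h0 h3 h2 a b; elim: a => [|a IH]; last exact: h2.
by elim: b => [|b IH] //; apply: h3.
Qed.

Lemma PsiS3 a b i j k : Psi a b.+1 i j k = Psi a b i.+1 j.+1 k.+1.
Proof.
rewrite /Psi /=; move: (iter b mulS3 Theta) => F.
by elim: a i j k => [|a IH] i j k //=; rewrite /mulS2 !IH.
Qed.

End LieElements.

Section TraceOfPsi.
Variable R : realType.
Local Notation P := {poly R}.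
Local Notation M3 := 'M[{poly R}]_3.

Lemma repk_letter (b : bool) l : repk l (fun w => (w == [:: b])%:R) =
  if l == 1%N then (if b then repY R else repX R) else 0.
Proof.
rewrite /repk; case: l => [|[|l]].
- by rewrite /= mulr0n scale0r.
- by case: b; rewrite /= mulr1n mulr0n scale0r ?addr0 ?add0r scale1r mulmx1.
- rewrite (eq_sum_words (G := fun _ => 0)) ?sum_words0 // => w hw.
  by case: eqP => [ew|_]; [rewrite ew in hw | rewrite mulr0n scale0r].
Qed.

Lemma repk_bracketY l g : repk l (bracket (sY R) g) =
  if (0 < l)%N then repY R *m repk l.-1 g - repk l.-1 g *m repY R else 0.
Proof.
rewrite repk_bracket; case: l => [|l].
  by rewrite big_ord1 /= repk_letter mul0mx mulmx0 subrr.
rewrite sumrB /=; congr (_ - _).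
  rewrite (eq_bigr (fun i : 'I_l.+2 =>
      if nat_of_ord i == 1%N then repY R *m repk (l.+1 - i) g else 0)).
    by rewrite (sum_ord_eq _ _ (fun i => repY R *m repk (l.+1 - i) g)) subSS subn0.
  by move=> i _; rewrite repk_letter; case: eqP; rewrite ?mul0mx.
rewrite (eq_bigr (fun i : 'I_l.+2 =>
    if nat_of_ord i == l then repk i g *m repY R else 0)).
  by rewrite (sum_ord_eq _ _ (fun i => repk i g *m repY R)) ltnS leqnSn.
move=> [i hi] _ /=; rewrite repk_letter.
have -> : (l.+1 - i == 1)%N = (i == l) by apply/eqP/eqP; lia.
by case: eqP; rewrite ?mulmx0.
Qed.

Fixpoint repE (q : nat) : M3 :=
  if q is q'.+1 then repY R *m repE q' - repE q' *m repY R else repX R.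

Lemma repk_ady l q : repk l (ady R q) = if l == q.+1 then repE q else 0.
Proof.
elim: q l => [|q IH] l; first exact: repk_letter.
rewrite /= repk_bracketY; case: l => [|l] //=.
by rewrite IH eqSS; case: eqP; rewrite ?mulmx0 ?mul0mx ?subrr.
Qed.

Lemma sum_ord_eq_mulmx l c1 c2 (A B : M3) : (0 < c2)%N ->
  \sum_(r < l.+1) (if nat_of_ord r == c1 then A else 0) *m
                  (if (l - r == c2)%N then B else 0)
  = if l == (c1 + c2)%N then A *m B else 0.
Proof.
move=> c2_gt0.
rewrite (eq_bigr (fun r : 'I_l.+1 => if nat_of_ord r == c1 then
    (if l == (c1 + c2)%N then A *m B else 0) else 0)) => [|r _]; last first.
  case: eqP => [->|_]; last by rewrite mul0mx.
  have -> : (l - c1 == c2)%N = (l == c1 + c2)%N by apply/eqP/eqP; lia.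
  by case: ifP; rewrite ?mulmx0.
rewrite (sum_ord_eq _ _ (fun _ => if l == (c1 + c2)%N then A *m B else 0)).
case: eqP => [->|_]; last by rewrite if_same.
by rewrite ifT //; lia.
Qed.

Lemma repk_bracket_ady l i j : repk l (bracket (ady R i) (ady R j)) =
  if l == (i + j).+2 then repE i *m repE j - repE j *m repE i else 0.
Proof.
rewrite repk_bracket sumrB.
under eq_bigr do rewrite !repk_ady.
under [X in _ - X]eq_bigr do rewrite !repk_ady.
rewrite !sum_ord_eq_mulmx //.
have -> : (i.+1 + j.+1 = (i + j).+2)%N by lia.
have -> : (j.+1 + i.+1 = (i + j).+2)%N by lia.
by case: eqP; rewrite ?subrr.
Qed.

Definition ftheta i j k : P := \tr ((repE i *m repE j - repE j *m repE i) *m repE k).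

Lemma trace_form_Theta n i j k :
  trace_form n (Theta R i j k) = if n == (i + j + k + 3)%N then ftheta i j k else 0.
Proof.
rewrite trace_form_tprod.
under eq_bigr do rewrite repk_bracket_ady repk_ady.
rewrite -raddf_sum sum_ord_eq_mulmx //.
have -> : ((i + j).+2 + k.+1 = i + j + k + 3)%N by lia.
by case: eqP; rewrite ?raddf0.
Qed.

Lemma repE_formula q : repE q = \matrix_(r, s) (repX R r s * (yval R r - yval R s) ^+ q).
Proof.
elim: q => [|q IH] /=; first by apply/matrixP => r s; rewrite !mxE expr0 mulr1.
rewrite IH /repY mul_diag_mx mul_mx_diag; apply/matrixP => r s; rewrite !mxE exprS; ring.
Qed.

(* The differences [yval r - yval (r + 1 mod 3)] of the diagonal entries of [repY];
   they sum to zero. *)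
Definition w0 : P := 'X.
Definition w1 : P := 1.
Definition w2 : P := -1 - 'X.

Definition cyc i j k : P :=
  w0 ^+ i * w1 ^+ j * w2 ^+ k + w1 ^+ i * w2 ^+ j * w0 ^+ k + w2 ^+ i * w0 ^+ j * w1 ^+ k.

Lemma trace_repE3 i j k : \tr (repE i *m repE j *m repE k) = cyc i j k.
Proof.
rewrite !repE_formula /mxtrace !big_ord_recl !big_ord0 !mxE.
rewrite !big_ord_recl !big_ord0 !mxE !big_ord_recl !big_ord0 !mxE /= /yval /=.
rewrite /cyc /w0 /w1 /w2 !mulr1n !mulr0n.
rewrite !(mul0r, mulr0, add0r, addr0, mul1r, subr0, sub0r, opprK); ring.
Qed.

Lemma ftheta_cyc i j k : ftheta i j k = cyc i j k - cyc j i k.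
Proof. by rewrite /ftheta mulmxBl raddfB /= !trace_repE3. Qed.

Definition sigma2 : P := w0 * w1 + w1 * w2 + w2 * w0.
Definition sigma3 : P := w0 * w1 * w2.

Lemma ftheta_mulS2 i j k :
  ftheta i.+1 j.+1 k + ftheta i j.+1 k.+1 + ftheta i.+1 j k.+1 = sigma2 * ftheta i j k.
Proof. by rewrite !ftheta_cyc /cyc /sigma2 !exprS; ring. Qed.

Lemma ftheta_mulS3 i j k : ftheta i.+1 j.+1 k.+1 = sigma3 * ftheta i j k.
Proof. by rewrite !ftheta_cyc /cyc /sigma3 !exprS; ring. Qed.

Lemma trace_form_Psi n a b i j k : trace_form n (Psi R a b i j k) =
  if n == (2 * a + 3 * b + i + j + k + 3)%N
  then sigma2 ^+ a * sigma3 ^+ b * ftheta i j k else 0.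
Proof.
elim: a i j k => [|a IH] i j k /=.
  rewrite mul1r; elim: b i j k => [|b IHb] i j k /=.
    by rewrite mul1r trace_form_Theta.
  rewrite [LHS]IHb ftheta_mulS3 exprS mulrCA mulrA.
  by have -> : (2 * 0 + 3 * b + i.+1 + j.+1 + k.+1 + 3
                = 2 * 0 + 3 * b.+1 + i + j + k + 3)%N by lia.
rewrite /mulS2 !trace_formD !IH.
have -> : (2 * a + 3 * b + i.+1 + j.+1 + k = 2 * a.+1 + 3 * b + i + j + k)%N by lia.
have -> : (2 * a + 3 * b + i + j.+1 + k.+1 = 2 * a.+1 + 3 * b + i + j + k)%N by lia.
have -> : (2 * a + 3 * b + i.+1 + j + k.+1 = 2 * a.+1 + 3 * b + i + j + k)%N by lia.
case: eqP => _; last by rewrite !addr0.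
by rewrite -!mulrDr ftheta_mulS2 exprS; ring.
Qed.

Lemma ftheta012_at0 : (ftheta 0 1 2).[0] = 2.
Proof. by rewrite ftheta_cyc /cyc /w0 /w1 /w2 !hornerE /=; ring. Qed.

Lemma trace_form_images_free d b0 (a : nat -> nat) (c : 'I_d -> R) :
  \sum_(l < d) c l *: (sigma2 ^+ a l * sigma3 ^+ (b0 + 2 * l) * ftheta 0 1 2) = 0 ->
  forall l, c l = 0.
Proof.
pose h : P := -1 - 'X.
move=> hsum; apply: (@free_of_distinct_valuations _ _ (fun l => b0 + 2 * l)%N
  (fun l => sigma2 ^+ a l * h ^+ (b0 + 2 * l) * ftheta 0 1 2)).
- by move=> l l' /eqP; rewrite eqn_add2l eqn_mul2l /= => /eqP /val_inj.
- move=> l; rewrite -horner_coef0 !hornerE ftheta012_at0.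
  by rewrite subr0 !mulf_neq0 ?expf_neq0 ?oppr_eq0 ?oner_eq0 ?pnatr_eq0.
- rewrite -[RHS]hsum; apply: eq_bigr => l _.
  have -> : sigma3 = 'X * h by rewrite /sigma3 /w0 /w1 /w2 /h; ring.
  by rewrite exprMn; congr (_ *: _); ring.
Qed.

End TraceOfPsi.

Section PsiRelations.
Variable R : realType.
Local Notation tens := (tens R).
Local Notation Psi := (Psi R).

Lemma Psi_swap a b i j k : eqFL (Psi a b i j k) (tscale (-1) (Psi a b j i k)).
Proof.
move: i j k; apply: (Psi_ind (Q := fun F => forall i j k,
  eqFL (F i j k) (tscale (-1) (F j i k)))) => [i j k|F hF i j k|F hF i j k].
- apply: eqFL_ext => u v; rewrite /Theta /tprod /tscale.
  by rewrite [bracket (ady R j) _]bracket_anti /sscale; ring.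
- exact: hF.
- apply: eqFL_trans (eqFLD (eqFLD (hF i.+1 j.+1 k) (hF i j.+1 k.+1)) (hF i.+1 j k.+1)) _.
  by apply: eqFL_ext => u v; rewrite /mulS2 /tadd /tscale; ring.
Qed.

Lemma Psi_rot a b i j k : eqFL (Psi a b i j k) (Psi a b j k i).
Proof.
move: i j k; apply: (Psi_ind (Q := fun F => forall i j k,
  eqFL (F i j k) (F j k i))) => [i j k|F hF i j k|F hF i j k].
- apply: eqFL_trans (eqFL_sym (eqFL_invariant (inL_ady R i) (inL_ady R j) (inL_ady R k))) _.
  exact: eqFL_tprodC (inL_ady R i) (inL_br (inL_ady R j) (inL_ady R k)).
- exact: hF.
- apply: eqFL_trans (eqFLD (eqFLD (hF i.+1 j.+1 k) (hF i j.+1 k.+1)) (hF i.+1 j k.+1)) _.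
  by apply: eqFL_ext => u v; rewrite /mulS2 /tadd; ring.
Qed.

Lemma Psi_xx a b i k : eqFL (Psi a b i i k) (tzero R).
Proof.
have := eqFLZ (1 / 2) (Psi_swap a b i i k); apply: FLrel_ext => u v.
by rewrite /tsub /tscale /tzero; field.
Qed.

Lemma Theta_delta i j k :
  FLrel (tadd (tadd (Theta R i.+1 j k) (Theta R i j.+1 k)) (Theta R i j k.+1)).
Proof.
have := eqFL_invariant (inL_br (inL_ady R i) (inL_ady R j)) (inL_Y R) (inL_ady R k).
have -> : bracket (bracket (ady R i) (ady R j)) (sY R) =
    sscale (-1) (sadd (bracket (ady R i.+1) (ady R j)) (bracket (ady R i) (ady R j.+1))).
  by rewrite bracket_anti jacobi.
rewrite tprodZl tprodDl; apply: FLrel_ext => u v.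
by rewrite /Theta /= /tsub /tadd /tscale; ring.
Qed.

Lemma Psi_delta a b i j k :
  FLrel (tadd (tadd (Psi a b i.+1 j k) (Psi a b i j.+1 k)) (Psi a b i j k.+1)).
Proof.
move: i j k; apply: (Psi_ind (Q := fun F => forall i j k,
  FLrel (tadd (tadd (F i.+1 j k) (F i j.+1 k)) (F i j k.+1)))) => [|F hF|F hF] i j k.
- exact: Theta_delta.
- exact: hF.
- have := tspan_add (tspan_add (hF i.+1 j.+1 k) (hF i j.+1 k.+1)) (hF i.+1 j k.+1).
  by apply: FLrel_ext => u v; rewrite /mulS2 /tadd; ring.
Qed.

(* [t^3 = σ₃ - σ₂ t] for each root [t] of [T^3 + σ₂ T - σ₃]. *)
Lemma Psi_reduce a b i j k : eqFL (Psi a b i.+3 j k)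
  (tadd (tscale (-1) (Psi a.+1 b i.+1 j k)) (Psi a b.+1 i j k)).
Proof.
have := Psi_delta a b i.+2 j k; apply: FLrel_ext => u v.
by rewrite PsiS3 /= /mulS2 /tsub /tadd /tscale; ring.
Qed.

End PsiRelations.

Section PsiSpan.
Variable R : realType.
Local Notation tens := (tens R).
Local Notation Psi := (Psi R).

(* [dim3 m] is the number of pairs [(a, b)] with [2a + 3b = m - 3]: these are
   the pairs [(basis_a m l, basis_b m l)] for [l < dim3 m].  The test [m < 3]
   guards against the truncated subtraction. *)
Definition dim3 m : nat :=
  if (m < 3)%N then 0 else
  if (3 * ((m - 3) %% 2) <= m - 3)%N then ((m - 3 - 3 * ((m - 3) %% 2)) %/ 6).+1
  else 0.
Definition basis_b m l : nat := ((m - 3) %% 2 + 2 * l)%N.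
Definition basis_a m l : nat := ((m - 3 - 3 * basis_b m l) %/ 2)%N.
Definition basis3 m (l : 'I_(dim3 m)) : tens := Psi (basis_a m l) (basis_b m l) 0 1 2.

Local Notation spanned3 m := (spanned (@basis3 m)).

Lemma basis_degree m l : (l < dim3 m)%N -> (2 * basis_a m l + 3 * basis_b m l + 3 = m)%N.
Proof. by rewrite /dim3 /basis_a /basis_b; case: ifP => h1 //; case: ifP => h2 // h; lia. Qed.

Lemma spanned_Psi012 a b : spanned3 (2 * a + 3 * b + 3) (Psi a b 0 1 2).
Proof.
set m := (2 * a + 3 * b + 3)%N.
have hl : (b %/ 2 < dim3 m)%N by rewrite /dim3 /m; case: ifP; [lia | rewrite ifT; lia].
have hb : basis_b m (b %/ 2) = b by rewrite /basis_b /m; lia.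
have ha : basis_a m (b %/ 2) = a by rewrite /basis_a hb /m; lia.
by have := spanned_gen (@basis3 m) (Ordinal hl); rewrite /basis3 /= ha hb.
Qed.

Lemma spanned_Psi_rot m a b i j k :
  spanned3 m (Psi a b j k i) -> spanned3 m (Psi a b i j k).
Proof. by move=> h; exact: spanned_eqFL (Psi_rot R a b i j k) h. Qed.

Lemma spanned_Psi_swap m a b i j k :
  spanned3 m (Psi a b j i k) -> spanned3 m (Psi a b i j k).
Proof. by move/(spannedZ (-1)) => h; exact: spanned_eqFL (Psi_swap R a b i j k) h. Qed.

Lemma spanned_Psi_small a b i j k : (i < 3)%N -> (j < 3)%N -> (k < 3)%N ->
  spanned3 (2 * a + 3 * b + (i + j + k)) (Psi a b i j k).
Proof.
move=> hi hj hk.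
have Z m i' k' : spanned3 m (Psi a b i' i' k').
  exact: spanned_eqFL (Psi_xx R a b i' k') (spanned0 _).
case: (eqVneq i j) => [<-|nij]; first exact: Z.
case: (eqVneq j k) => [<-|njk]; first by apply: spanned_Psi_rot; apply: Z.
case: (eqVneq i k) => [<-|nik]; first by do 2 apply: spanned_Psi_rot; apply: Z.
have -> : (i + j + k = 3)%N by lia.
have := spanned_Psi012 a b.
move: i j k hi hj hk nij njk nik => [|[|[|//]]] [|[|[|//]]] [|[|[|//]]] //= _ _ _ _ _ _ B.
- by apply: spanned_Psi_swap; apply: spanned_Psi_rot.
- by apply: spanned_Psi_swap.
- by do 2 apply: spanned_Psi_rot.
- by apply: spanned_Psi_rot.
- by apply: spanned_Psi_swap; do 2 apply: spanned_Psi_rot.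
Qed.

Lemma spanned_Psi n a b i j k : (i + j + k = n)%N ->
  spanned3 (2 * a + 3 * b + n) (Psi a b i j k).
Proof.
elim/ltn_ind: n a b i j k => n IH a b i j k hn.
have large a' b' i' j' k' : (i' + j' + k' = n)%N -> (3 <= i')%N ->
    spanned3 (2 * a' + 3 * b' + n) (Psi a' b' i' j' k').
  move=> hn' hi'; have -> : i' = (i' - 3).+3 by lia.
  apply: spanned_eqFL (Psi_reduce R _ _ _ _ _) _; apply: spannedD; first apply: spannedZ.
  - have -> : (2 * a' + 3 * b' + n = 2 * a'.+1 + 3 * b' + (n - 2))%N by lia.
    by apply: IH; lia.
  - have -> : (2 * a' + 3 * b' + n = 2 * a' + 3 * b'.+1 + (n - 3))%N by lia.
    by apply: IH; lia.
case: (leqP 3 i) => hi; first exact: large.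
case: (leqP 3 j) => hj; first by apply: spanned_Psi_rot; apply: large => //; lia.
case: (leqP 3 k) => hk; first by do 2 apply: spanned_Psi_rot; apply: large => //; lia.
by rewrite -hn; apply: spanned_Psi_small.
Qed.

Lemma spanned_Theta i j k : spanned3 (i + j + k) (Theta R i j k).
Proof. by have := @spanned_Psi (i + j + k) 0 0 i j k erefl; rewrite !muln0. Qed.

End PsiSpan.

Inductive tree := Lx | Ly | Br of tree & tree.

Fixpoint xdeg t := match t with Lx => 1%N | Ly => 0%N | Br a b => (xdeg a + xdeg b)%N end.
Fixpoint ydeg t := match t with Lx => 0%N | Ly => 1%N | Br a b => (ydeg a + ydeg b)%N end.

Section Trees.
Variable R : realType.
Local Notation ser := (ser R).
Local Notation tens := (tens R).
Local Notation spanned3 m := (spanned (@basis3 R m)).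

Fixpoint tree_ser (t : tree) : ser :=
  match t with
  | Lx => sX R
  | Ly => sY R
  | Br a b => bracket (tree_ser a) (tree_ser b)
  end.

Lemma inL_tree_ser t : inL (tree_ser t).
Proof. by elim: t => [||a ha b hb] /=; [apply: inL_X | apply: inL_Y | apply: inL_br]. Qed.

Lemma tree_ser_xdeg0 t : xdeg t = 0%N ->
  (tree_ser t = sY R /\ ydeg t = 1%N) \/ tree_ser t = szero R.
Proof.
elim: t => [||a IHa b IHb] //=; first by left.
move=> h; right.
case: (IHa (_ : xdeg a = 0%N)) => [|[-> _]|->]; [lia | | by rewrite bracket0l].
case: (IHb (_ : xdeg b = 0%N)) => [|[-> _]|->]; [lia | | by rewrite bracket0r].
exact: bracketxx.
Qed.

Lemma tree_ser_xdeg1 t : xdeg t = 1%N -> exists c, tree_ser t = sscale c (ady R (ydeg t)).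
Proof.
elim: t => [||a IHa b IHb] //=; first by exists 1; rewrite sscale1.
move=> h; have [[ha hb]|[ha hb]] : (xdeg a = 1 /\ xdeg b = 0 \/ xdeg a = 0 /\ xdeg b = 1)%N.
  by lia.
- have [c ->] := IHa ha.
  case: (tree_ser_xdeg0 hb) => [[-> ->]|->]; last by exists 0; rewrite bracket0r sscale0.
  exists (- c); rewrite addn1 /= bracketZl bracket_anti sscaleA.
  by congr sscale; ring.
- have [c ->] := IHb hb.
  case: (tree_ser_xdeg0 ha) => [[-> ->]|->]; last by exists 0; rewrite bracket0l sscale0.
  by exists c; rewrite add1n /= bracketZr.
Qed.

Lemma spanned_tprod_xdeg2 t q : xdeg t = 2%N ->
  spanned3 (ydeg t + q) (tprod (tree_ser t) (ady R q)).
Proof.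
elim: t q => [||a IHa b IHb] q //= h.
have [[ha hb]|[[ha hb]|[ha hb]]] :
  (xdeg a = 2 /\ xdeg b = 0 \/ xdeg a = 0 /\ xdeg b = 2 \/ xdeg a = 1 /\ xdeg b = 1)%N.
  by lia.
- case: (tree_ser_xdeg0 hb) => [[-> ->]|->]; last by rewrite bracket0r tprod0l; apply: spanned0.
  apply: spanned_eqFL (eqFL_sym (eqFL_invariant (inL_tree_ser a) (inL_Y R) (inL_ady R q))) _.
  by rewrite -addnA add1n; apply: IHa.
- case: (tree_ser_xdeg0 ha) => [[-> ->]|->]; last by rewrite bracket0l tprod0l; apply: spanned0.
  rewrite bracket_anti tprodZl; apply: spannedZ.
  apply: spanned_eqFL (eqFL_sym (eqFL_invariant (inL_tree_ser b) (inL_Y R) (inL_ady R q))) _.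
  by rewrite -addnA add1n -addnS; apply: IHb.
- have [c1 ->] := tree_ser_xdeg1 ha; have [c2 ->] := tree_ser_xdeg1 hb.
  rewrite bracketZl bracketZr !tprodZl; do 2 apply: spannedZ.
  exact: spanned_Theta.
Qed.

Lemma spanned_tprodY t : xdeg t = 3%N -> spanned3 (1 + ydeg t) (tprod (sY R) (tree_ser t)).
Proof.
case: t => [||a b] //= h.
have inv := eqFL_invariant (inL_Y R) (inL_tree_ser a) (inL_tree_ser b).
have [[ha hb]|[[ha hb]|[[ha hb]|[ha hb]]]] : (xdeg a = 0 /\ xdeg b = 3 \/
    xdeg a = 1 /\ xdeg b = 2 \/ xdeg a = 2 /\ xdeg b = 1 \/ xdeg a = 3 /\ xdeg b = 0)%N.
  by lia.
- apply: spanned_eqFL inv _.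
  case: (tree_ser_xdeg0 ha) => [[-> _]|->]; last by rewrite bracket0r tprod0l; apply: spanned0.
  by rewrite bracketxx tprod0l; apply: spanned0.
- apply: spanned_eqFL inv _.
  have [c ->] := tree_ser_xdeg1 ha; rewrite bracketZr tprodZl; apply: spannedZ.
  apply: spanned_eqFL (eqFL_tprodC (inL_ady R (ydeg a).+1) (inL_tree_ser b)) _.
  by rewrite addnA add1n addnC; apply: spanned_tprod_xdeg2.
- apply: spanned_eqFL inv _.
  have [c ->] := tree_ser_xdeg1 hb; rewrite tprodZr; apply: spannedZ.
  by rewrite addnA; apply: (@spanned_tprod_xdeg2 (Br Ly a)).
- case: (tree_ser_xdeg0 hb) => [[-> _]|->]; last by rewrite bracket0r tprod0r; apply: spanned0.
  rewrite bracket_anti tprodZr; apply: spannedZ.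
  apply: spanned_eqFL (eqFL_invariant (inL_Y R) (inL_Y R) (inL_tree_ser a)) _.
  by rewrite bracketxx tprod0l; apply: spanned0.
Qed.

Lemma spanned_tprod_tree t1 t2 : (xdeg t1 + xdeg t2 = 3)%N ->
  spanned3 (ydeg t1 + ydeg t2) (tprod (tree_ser t1) (tree_ser t2)).
Proof.
move=> h; have [[h1 h2]|[[h1 h2]|[[h1 h2]|[h1 h2]]]] : (xdeg t1 = 0 /\ xdeg t2 = 3 \/
    xdeg t1 = 1 /\ xdeg t2 = 2 \/ xdeg t1 = 2 /\ xdeg t2 = 1 \/ xdeg t1 = 3 /\ xdeg t2 = 0)%N.
  by lia.
- case: (tree_ser_xdeg0 h1) => [[-> ->]|->]; last by rewrite tprod0l; apply: spanned0.
  exact: spanned_tprodY.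
- have [c ->] := tree_ser_xdeg1 h1; rewrite tprodZl; apply: spannedZ.
  apply: spanned_eqFL (eqFL_tprodC (inL_ady R _) (inL_tree_ser t2)) _.
  by rewrite addnC; apply: spanned_tprod_xdeg2.
- have [c ->] := tree_ser_xdeg1 h2; rewrite tprodZr; apply: spannedZ.
  exact: spanned_tprod_xdeg2.
- apply: spanned_eqFL (eqFL_tprodC (inL_tree_ser t1) (inL_tree_ser t2)) _.
  case: (tree_ser_xdeg0 h2) => [[-> ->]|->]; last by rewrite tprod0l; apply: spanned0.
  by rewrite addnC; apply: spanned_tprodY.
Qed.

End Trees.

Section Homogeneity.
Variable R : realType.
Local Notation ser := (ser R).
Local Notation tens := (tens R).

Definition shomog p q (f : ser) :=
  forall w, f w != 0 -> count negb w = p /\ count id w = q.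

Lemma shomog_smul p1 q1 p2 q2 f g w : shomog p1 q1 f -> shomog p2 q2 g ->
  smul f g w != 0 -> count negb w = (p1 + p2)%N /\ count id w = (q1 + q2)%N.
Proof.
move=> hf hg /exists_neq0_of_sum [i]; rewrite mulf_eq0 negb_or => /andP [h1 h2].
have [a1 b1] := hf _ h1; have [a2 b2] := hg _ h2.
by rewrite -(cat_take_drop i w) !count_cat a1 a2 b1 b2.
Qed.

Lemma shomog_bracket p1 q1 p2 q2 f g : shomog p1 q1 f -> shomog p2 q2 g ->
  shomog (p1 + p2) (q1 + q2) (bracket f g).
Proof.
move=> hf hg w; case: (eqVneq (smul f g w) 0) => [h1|h1 _]; last exact: shomog_smul h1.
rewrite /bracket h1 sub0r oppr_eq0 => h2.
by rewrite addnC [(q1 + _)%N]addnC; apply: shomog_smul h2.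
Qed.

Lemma shomog_tree_ser t : shomog (xdeg t) (ydeg t) (tree_ser R t).
Proof.
elim: t => [||a ha b hb] /=; last exact: shomog_bracket.
- move=> w; rewrite /sX; case: (eqVneq w [:: false]) => [->|_] //.
  by rewrite mulr0n eqxx.
- move=> w; rewrite /sY; case: (eqVneq w [:: true]) => [->|_] //.
  by rewrite mulr0n eqxx.
Qed.

Lemma shomog_ady q : shomog 1 q (ady R q).
Proof.
elim: q => [|q IH] /=; first exact: (@shomog_tree_ser Lx).
by have := shomog_bracket (@shomog_tree_ser Ly) IH; rewrite add0n add1n.
Qed.

Lemma homog_tprod p1 q1 p2 q2 a b : shomog p1 q1 a -> shomog p2 q2 b ->
  homog (p1 + p2) (q1 + q2) (tprod a b).
Proof.
move=> ha hb u v; rewrite mulf_eq0 negb_or => /andP [h1 h2].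
have [a1 b1] := ha _ h1; have [a2 b2] := hb _ h2.
by rewrite !count_cat a1 a2 b1 b2.
Qed.

Lemma homogD p q (s t : tens) : homog p q s -> homog p q t -> homog p q (tadd s t).
Proof.
move=> hs ht u v; case: (eqVneq (s u v) 0) => [h1|h1 _]; last exact: hs.
by rewrite /tadd h1 add0r; apply: ht.
Qed.

Lemma homog_Psi a b i j k : homog 3 (2 * a + 3 * b + i + j + k) (Psi R a b i j k).
Proof.
elim: a i j k => [|a IH] i j k /=.
  elim: b i j k => [|b IHb] i j k /=.
    exact: homog_tprod (shomog_bracket (@shomog_ady i) (@shomog_ady j)) (@shomog_ady k).
  have -> : (3 * b.+1 + i + j + k = 3 * b + i.+1 + j.+1 + k.+1)%N by lia.
  exact: IHb.
apply: homogD; first apply: homogD.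
- by have -> : (2 * a.+1 + 3 * b + i + j + k = 2 * a + 3 * b + i.+1 + j.+1 + k)%N by lia.
- by have -> : (2 * a.+1 + 3 * b + i + j + k = 2 * a + 3 * b + i + j.+1 + k.+1)%N by lia.
- by have -> : (2 * a.+1 + 3 * b + i + j + k = 2 * a + 3 * b + i.+1 + j + k.+1)%N by lia.
Qed.

End Homogeneity.

Section TreeCombinations.
Variable R : realType.
Local Notation ser := (ser R).
Local Notation tens := (tens R).
Local Notation spanned3 m := (spanned (@basis3 R m)).

Definition tree_comb (s : seq (R * tree)) : ser :=
  fun w => \sum_(x <- s) x.1 * tree_ser R x.2 w.

Definition tree_comb2 (s : seq (R * tree * tree)) : tens :=
  fun u v => \sum_(x <- s) x.1.1 * (tree_ser R x.1.2 u * tree_ser R x.2 v).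

Lemma smul_tree_comb s1 s2 w : smul (tree_comb s1) (tree_comb s2) w =
  \sum_(x <- s1) \sum_(y <- s2) x.1 * y.1 * smul (tree_ser R x.2) (tree_ser R y.2) w.
Proof.
rewrite /smul /tree_comb.
under eq_bigr => i _.
  rewrite mulr_suml; under eq_bigr => x _ do rewrite mulr_sumr.
  over.
rewrite exchange_big; apply: eq_bigr => x _; rewrite exchange_big; apply: eq_bigr => y _.
by rewrite mulr_sumr; apply: eq_bigr => i _; ring.
Qed.

Lemma inL_tree_comb f : inL f -> exists s, f = tree_comb s.
Proof.
elim=> [| | |a b _ [s1 ->] _ [s2 ->]|c a _ [s ->]|a b _ [s1 ->] _ [s2 ->]].
- by exists [:: (1, Lx)]; apply: ser_ext => w; rewrite /tree_comb big_seq1 mul1r.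
- by exists [:: (1, Ly)]; apply: ser_ext => w; rewrite /tree_comb big_seq1 mul1r.
- by exists [::]; apply: ser_ext => w; rewrite /tree_comb big_nil.
- by exists (s1 ++ s2); apply: ser_ext => w; rewrite /sadd /tree_comb big_cat.
- exists [seq (c * x.1, x.2) | x <- s]; apply: ser_ext => w.
  by rewrite /sscale /tree_comb big_map mulr_sumr; apply: eq_bigr => x _; rewrite mulrA.
- exists [seq (x.1 * y.1, Br x.2 y.2) | x <- s1, y <- s2]; apply: ser_ext => w.
  rewrite /tree_comb big_allpairs_dep /bracket !smul_tree_comb.
  rewrite [X in _ - X]exchange_big -sumrB; apply: eq_bigr => x _.
  by rewrite -sumrB; apply: eq_bigr => y _ /=; rewrite /bracket; ring.
Qed.

Lemma LL_tree_comb2 t : LL t -> exists s, t = tree_comb2 s.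
Proof.
elim=> [|_ [a [b [ha hb ->]]]|s0 t0 _ [s1 ->] _ [s2 ->]|c t0 _ [s ->]].
- by exists [::]; apply: tens_ext => u v; rewrite /tree_comb2 big_nil.
- have [s1 ->] := inL_tree_comb ha; have [s2 ->] := inL_tree_comb hb.
  exists [seq (x.1 * y.1, x.2, y.2) | x <- s1, y <- s2]; apply: tens_ext => u v.
  rewrite /tree_comb2 big_allpairs_dep /tprod /tree_comb mulr_suml.
  by apply: eq_bigr => x _; rewrite mulr_sumr; apply: eq_bigr => y _ /=; ring.
- by exists (s1 ++ s2); apply: tens_ext => u v; rewrite /tadd /tree_comb2 big_cat.
- exists [seq (c * x.1.1, x.1.2, x.2) | x <- s]; apply: tens_ext => u v.
  by rewrite /tscale /tree_comb2 big_map mulr_sumr; apply: eq_bigr => x _; rewrite mulrA.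
Qed.

Definition bideg (x : R * tree * tree) : nat * nat :=
  (xdeg x.1.2 + xdeg x.2, ydeg x.1.2 + ydeg x.2)%N.

Lemma tree_comb2_homog p q s : homog p q (tree_comb2 s) ->
  tree_comb2 s = tree_comb2 [seq x <- s | bideg x == (p, q)].
Proof.
move=> hom; apply: tens_ext => u v; rewrite /tree_comb2 big_filter.
have bideg_supp x : x.1.1 * (tree_ser R x.1.2 u * tree_ser R x.2 v) != 0 ->
    bideg x = (count negb (u ++ v), count id (u ++ v)).
  rewrite !mulf_eq0 !negb_or => /and3P [_ hu hv].
  have [a1 b1] := shomog_tree_ser hu; have [a2 b2] := shomog_tree_ser hv.
  by rewrite /bideg !count_cat a1 a2 b1 b2.
rewrite [RHS]big_mkcond; case: (boolP ((count negb (u ++ v), count id (u ++ v)) == (p, q))).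
- move=> /eqP huv; apply: eq_bigr => x _; case: ifP => // /negbT.
  by apply: contraNeq => /bideg_supp ->; rewrite huv.
- move=> huv; rewrite [RHS]big1 => [|x _]; last first.
    case: ifP => // /eqP hx; apply/eqP; apply: contraNT huv.
    by move=> /bideg_supp <-; rewrite hx.
  by apply/eqP; apply: contraNT huv => /hom [-> ->].
Qed.

Lemma spanned_tree_comb2 (m : nat) s : all (fun x => bideg x == (3, m)%N) s ->
  spanned3 m (tree_comb2 s).
Proof.
elim: s => [_|x s IH /= /andP [/eqP hx /IH hs]].
  rewrite (_ : tree_comb2 _ = tzero R); first exact: spanned0.
  by apply: tens_ext => u v; rewrite /tree_comb2 big_nil.
have -> : tree_comb2 (x :: s) =
    tadd (tscale x.1.1 (tprod (tree_ser R x.1.2) (tree_ser R x.2))) (tree_comb2 s).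
  by apply: tens_ext => u v; rewrite /tree_comb2 big_cons.
apply: spannedD hs; apply: spannedZ; case: hx => hx <-.
exact: spanned_tprod_tree.
Qed.

Lemma LL_homog_spanned m t : LL t -> homog 3 m t -> spanned3 m t.
Proof.
move=> /LL_tree_comb2 [s ->] /tree_comb2_homog ->.
by apply: spanned_tree_comb2; apply: filter_all.
Qed.

End TreeCombinations.

Section Basis.
Variable R : realType.

Lemma LL_Psi a b i j k : LL (Psi R a b i j k).
Proof.
move: i j k; apply: (Psi_ind (Q := fun F => forall i j k, LL (F i j k))).
- move=> i j k; apply: tspan_gen; exists (bracket (ady R i) (ady R j)), (ady R k).
  by split=> //; [apply: inL_br; apply: inL_ady | apply: inL_ady].
- by move=> F hF i j k; apply: hF.
- by move=> F hF i j k; apply: tspan_add; [apply: tspan_add|]; apply: hF.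
Qed.

Lemma homog_basis3 m l : homog 3 m (@basis3 R m l).
Proof.
rewrite /basis3 -[X in homog _ X](basis_degree (ltn_ord l)).
by have := @homog_Psi R (basis_a m l) (basis_b m l) 0 1 2; rewrite addn0 -addnA.
Qed.

Lemma trace_form_basis3 m l : trace_form (m + 3) (@basis3 R m l) =
  sigma2 R ^+ basis_a m l * sigma3 R ^+ ((m - 3) %% 2 + 2 * l) * ftheta R 0 1 2.
Proof.
rewrite /basis3 trace_form_Psi ifT //.
by have := basis_degree (ltn_ord l); rewrite /basis_b => h; apply/eqP; lia.
Qed.

Lemma dim3E m : (dim3 m)%:Z = ((m%:Z - 1) %/ 2)%Z - ((m%:Z - 1) %/ 3)%Z.
Proof. by rewrite /dim3; case: ifP => h1; [|case: ifP => h2]; lia. Qed.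

End Basis.

Theorem mainTheorem10 (R : realType) (m : nat) :
  exists d : nat, FLdim R 3 m d /\
    (d%:Z = ((m%:Z - 1) %/ 2)%Z - ((m%:Z - 1) %/ 3)%Z).
Proof.
exists (dim3 m); split; last exact: dim3E.
exists (@basis3 R m); split.
- by move=> l; split; [apply: LL_Psi | apply: homog_basis3].
- move=> c /(trace_form_FLrel (m + 3)).
  rewrite trace_form_tsum; under eq_bigr do rewrite trace_form_basis3.
  exact: trace_form_images_free.
- move=> t tLL thom; exact: LL_homog_spanned.
Qed.
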